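(* Let $\lambda$ be an infinite cardinal and let $(\mathscr T,\bar{\mathbf I})$ be a $\lambda^+$-complete tagged tree. Suppose $\lim(\mathscr T)=\bigcup_{\alpha<\lambda}\mathbb B_\alpha$, where each $\mathbb B_\alpha$ is a Borel subset of $\lim(\mathscr T)$. Then there are $\alpha<\lambda$ and a tree $\mathscr T^\dagger$ with $(\mathscr T,\bar{\mathbf I})\le^*(\mathscr T^\dagger,\bar{\mathbf I})$ and $\lim(\mathscr T^\dagger)\subseteq\mathbb B_\alpha$. In particular, if $\mathbf H$ is a function on $\lim(\mathscr T)$ with $|\mathrm{Rang}(\mathbf H)|\le\lambda$ and every fiber $\mathbf H^{-1}(\{x\})$ Borel, then there is $\mathscr T^\dagger$ with $(\mathscr T,\bar{\mathbf I})\le^*(\mathscr T^\dagger,\bar{\mathbf I})$ such that $\mathbf H$ is constant on $\lim(\mathscr T^\dagger)$.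
   Context: A tree is a nonempty set $\mathscr T$ of finite sequences of ordinals, closed under initial segments, such that every $\eta\in\mathscr T$ has at least one immediate successor in $\mathscr T$; $\mathrm{Succ}_{\mathscr T}(\eta)=\{\eta^\frown\langle\alpha\rangle:\eta^\frown\langle\alpha\rangle\in\mathscr T\}$. $\lim(\mathscr T)$ is the set of $\omega$-sequences of ordinals all of whose finite initial segments lie in $\mathscr T$, with the topology whose basic open sets are $\{\nu\in\lim(\mathscr T):\eta\triangleleft\nu\}$ for $\eta\in\mathscr T$; ''Borel'' refers to this topology. An ideal on a set $X$ is a family of subsets of $X$ containing all singletons, closed under subsets and finite unions, and not containing $X$; it is $\mu$-complete if closed under unions of fewer than $\mu$ members. A tagged tree is a pair $(\mathscr T,\bar{\mathbf I})$ where $\mathscr T$ is a tree and $\bar{\mathbf I}$ assigns to some (possibly all) $\eta\in\mathscr T$ an ideal $\mathbf I_\eta$ on a set $\mathrm{Dom}(\mathbf I_\eta)\supseteq\mathrm{Succ}_{\mathscr T}(\eta)$. The tagged tree is $\mu$-complete if every defined $\mathbf I_\eta$ ($\eta\in\mathscr T$) is $\mu$-complete. $\eta\in\mathscr T$ is a splitting point of $(\mathscr T,\bar{\mathbf I})$ if $\mathbf I_\eta$ is defined and $\mathrm{Succ}_{\mathscr T}(\eta)\notin\mathbf I_\eta$. For trees $\mathscr T'\subseteq\mathscr T$, $(\mathscr T,\bar{\mathbf I})\le^*(\mathscr T',\bar{\mathbf I})$ means: for every $\eta\in\mathscr T'$ which is a splitting point of $(\mathscr T,\bar{\mathbf I})$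 we have $\mathrm{Succ}_{\mathscr T'}(\eta)\notin\mathbf I_\eta$ (so the splitting points of $(\mathscr T',\bar{\mathbf I})$ are exactly the splitting points of $(\mathscr T,\bar{\mathbf I})$ lying in $\mathscr T'$). *)

From Stdlib Require Import List.
Import ListNotations.

Set Implicit Arguments.

Section Trees.
Variable O : Type.

Definition tree (T : list O -> Prop) : Prop :=
  (exists eta, T eta) /\
  (forall eta nu, T (eta ++ nu) -> T eta) /\
  (forall eta, T eta -> exists a, T (eta ++ [a])).

Definition Succ (T : list O -> Prop) (eta : list O) : list O -> Prop :=
  fun s => exists a, s = eta ++ [a] /\ T (eta ++ [a]).

Definition restr (x : nat -> O) (n : nat) : list O := map x (seq 0 n).

Definition is_init (eta : list O) (x : nat -> O) : Prop :=
  eta = restr x (length eta).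

Definition lim (T : list O -> Prop) (x : nat -> O) : Prop :=
  forall n, T (restr x n).

(* open subsets of lim(T): unions of basic open sets *)
Definition open_set_of (T : list O -> Prop) (N : list O -> Prop)
  : (nat -> O) -> Prop :=
  fun x => lim T x /\ exists eta, N eta /\ T eta /\ is_init eta x.

(* Borel subsets of lim(T) (predicates are read as subsets of lim T, i.e.
   up to agreement on lim T): the least sigma-algebra of subsets of lim(T)
   containing the open sets. *)
Definition Borel (T : list O -> Prop) (B : (nat -> O) -> Prop) : Prop :=
  forall S : ((nat -> O) -> Prop) -> Prop,
    (forall N, S (open_set_of T N)) ->
    (forall A, S A -> S (fun x => lim T x /\ ~ A x)) ->
    (forall F : nat -> (nat -> O) -> Prop,
        (forall n, S (F n)) -> S (fun x => exists n, F n x)) ->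
    (forall A A', S A -> (forall x, lim T x -> (A x <-> A' x)) -> S A') ->
    S B.

Definition ideal (X : list O -> Prop) (I : (list O -> Prop) -> Prop) : Prop :=
  (forall A, I A -> forall s, A s -> X s) /\
  (forall s, X s -> I (fun t => t = s)) /\
  (forall A B, I A -> (forall s, B s -> A s) -> I B) /\
  (forall A B, I A -> I B -> I (fun s => A s \/ B s)) /\
  ~ I X.

(* mu-complete with mu = lambda^+, lambda = |L|: closed under unions of
   families indexed by sets of cardinality <= lambda *)
Definition succ_complete (L : Type) (I : (list O -> Prop) -> Prop) : Prop :=
  forall (J : Type) (f : J -> L),
    (forall j j', f j = f j' -> j = j') ->
    forall A : J -> list O -> Prop,
      (forall j, I (A j)) -> I (fun s => exists j, A j s).

(* A tagged tree: Idef eta says I_eta is defined, Dom eta = Dom(I_eta),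
   I eta = I_eta. *)
Definition tagged_tree (T : list O -> Prop) (Idef : list O -> Prop)
  (Dom : list O -> list O -> Prop) (I : list O -> (list O -> Prop) -> Prop)
  : Prop :=
  tree T /\
  forall eta, T eta -> Idef eta ->
    ideal (Dom eta) (I eta) /\ (forall s, Succ T eta s -> Dom eta s).

Definition tagged_complete (L : Type) (T : list O -> Prop)
  (Idef : list O -> Prop) (I : list O -> (list O -> Prop) -> Prop) : Prop :=
  forall eta, T eta -> Idef eta -> succ_complete L (I eta).

Definition splitting (T : list O -> Prop) (Idef : list O -> Prop)
  (I : list O -> (list O -> Prop) -> Prop) (eta : list O) : Prop :=
  T eta /\ Idef eta /\ ~ I eta (Succ T eta).

Definition le_star (T : list O -> Prop) (Idef : list O -> Prop)
  (I : list O -> (list O -> Prop) -> Prop) (T' : list O -> Prop) : Prop :=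
  (forall eta, T' eta -> T eta) /\
  (forall eta, T' eta -> splitting T Idef I eta -> ~ I eta (Succ T' eta)).

End Trees.

From Stdlib Require Import List Arith Lia Classical ClassicalEpsilon Cantor.
Import ListNotations.

(* Every Borel subset of lim(T), and its complement, is analytic: it consists
   of the branches x admitting a witness w : nat -> nat with K (x|n) (w|n) for
   all n.  Given such a K, consider the game in which at a node nu the ideal
   player names a set Z in I_nu, and the opponent answers with a successor of
   nu (outside Z if nu splits) and the next digit of w; the ideal player wins
   as soon as K fails.  The game is open for the ideal player, hence
   determined.  If for some alpha the ideal player does not win the game for
   B_alpha, the positions from which the opponent survives form a tree
   T' >=* T whose branches all lie in B_alpha.  Otherwise there are winning
   strategies for every alpha; at each node their moves, over all alpha and
   all finite parts of w, form a union of at most lambda sets of I_nu, which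
   lies in I_nu by lambda^+-completeness, and a branch of T avoiding these
   unions lies in no B_alpha.  The second claim is the first one applied to
   the fibres of H. *)

Set Implicit Arguments.

Section Restrictions.
Variable O : Type.
Implicit Types x : nat -> O.

Lemma restr_length x n : length (restr x n) = n.
Proof. unfold restr. rewrite length_map, length_seq. reflexivity. Qed.

Lemma restr_S x n : restr x (S n) = restr x n ++ [x n].
Proof. unfold restr. rewrite seq_S, map_app. reflexivity. Qed.

Lemma restr_shift x n : restr x (S n) = x 0 :: restr (fun i => x (S i)) n.
Proof. unfold restr. simpl. f_equal. rewrite <- seq_shift, map_map. reflexivity. Qed.

Lemma firstn_restr x j n : j <= n -> firstn j (restr x n) = restr x j.
Proof.
  intros Hj. induction n.
  - replace j with 0 by lia. reflexivity.
  - destruct (Nat.eq_dec j (S n)) as [->|Hne].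
    + apply firstn_all2. rewrite restr_length. lia.
    + rewrite restr_S, firstn_app, restr_length.
      replace (j - n) with 0 by lia. rewrite app_nil_r. apply IHn. lia.
Qed.

Lemma nth_restr x i n d : i < n -> nth i (restr x n) d = x i.
Proof.
  intros Hi. unfold restr.
  rewrite nth_indep with (d' := x 0) by (rewrite length_map, length_seq; lia).
  rewrite map_nth, seq_nth by lia. reflexivity.
Qed.

Lemma restr_is_init x n : is_init (restr x n) x.
Proof. unfold is_init. rewrite restr_length. reflexivity. Qed.

End Restrictions.

Lemma prefix_bound (f : nat -> nat) j : exists m, j <= m /\ forall i, i < j -> f i < m.
Proof.
  induction j as [|j [m [Hjm Hm]]].
  - exists 0. split; intros; lia.
  - exists (S (Nat.max m (f j))). split; [lia|].
    intros i Hi. destruct (Nat.eq_dec i j) as [->|]; [lia|]. specialize (Hm i). lia.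
Qed.

Fixpoint list_code (l : list nat) : nat :=
  match l with [] => 0 | a :: r => S (to_nat (a, list_code r)) end.

Lemma list_code_inj l l' : list_code l = list_code l' -> l = l'.
Proof.
  revert l'. induction l as [|a l IH]; intros [|b l'] H; try discriminate; auto.
  assert (Hc : to_nat (a, list_code l) = to_nat (b, list_code l')) by exact (eq_add_S _ _ H).
  apply (f_equal of_nat) in Hc. rewrite !cancel_of_to in Hc.
  injection Hc as -> Hc. f_equal. auto.
Qed.

Section Analytic.
Variables (O : Type) (T : list O -> Prop).

Definition analytic (X : (nat -> O) -> Prop) : Prop :=
  exists K : list O -> list nat -> Prop, forall x, lim T x ->
    (X x <-> exists w : nat -> nat, forall n, K (restr x n) (restr w n)).

Definition lim_compl (X : (nat -> O) -> Prop) : (nat -> O) -> Prop :=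
  fun x => lim T x /\ ~ X x.

Lemma analytic_ext X X' :
  analytic X -> (forall x, lim T x -> (X x <-> X' x)) -> analytic X'.
Proof. intros [K HK] H. exists K. intros x Hx. rewrite <- H by auto. auto. Qed.

Lemma analytic_union (F : nat -> (nat -> O) -> Prop) :
  (forall n, analytic (F n)) -> analytic (fun x => exists n, F n x).
Proof.
  intros H. destruct (choice _ H) as [Kf HKf].
  (* the first digit of the witness selects the set *)
  exists (fun eta d => match d with
                       | [] => True
                       | n :: d' => Kf n (firstn (length d') eta) d' end).
  intros x Hx. split.
  - intros [n Hn]. apply HKf in Hn as [w Hw]; auto.
    exists (fun i => match i with 0 => n | S i => w i end).
    intros [|m]; [exact I|]. rewrite restr_shift. simpl.
    rewrite restr_length, firstn_restr by lia. apply Hw.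
  - intros [w Hw]. exists (w 0). apply HKf; auto. exists (fun i => w (S i)).
    intros m. specialize (Hw (S m)). rewrite restr_shift in Hw. simpl in Hw.
    rewrite restr_length, firstn_restr in Hw by lia. exact Hw.
Qed.

Lemma analytic_inter (F : nat -> (nat -> O) -> Prop) :
  (forall n, analytic (F n)) -> analytic (fun x => forall n, F n x).
Proof.
  intros H. destruct (choice _ H) as [Kf HKf].
  (* the witness for F n is stored at the positions to_nat (n, i) *)
  exists (fun eta d => forall n j, j <= length eta ->
     (forall i, i < j -> to_nat (n, i) < length d) ->
     Kf n (firstn j eta) (map (fun i => nth (to_nat (n, i)) d 0) (seq 0 j))).
  intros x Hx. split.
  - intros Hn.
    destruct (choice (fun n w => forall m, Kf n (restr x m) (restr w m)))
      as [wf Hwf]; [intros n; apply HKf; auto|].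
    exists (fun k => wf (fst (of_nat k)) (snd (of_nat k))).
    intros m n j Hj Hi. rewrite restr_length in Hj. rewrite firstn_restr by auto.
    replace (map _ (seq 0 j)) with (restr (wf n) j); [apply Hwf|].
    apply map_ext_in. intros i Hin. apply in_seq in Hin.
    rewrite nth_restr by (specialize (Hi i); rewrite restr_length in Hi; lia).
    rewrite cancel_of_to. reflexivity.
  - intros [w Hw] n. apply HKf; auto. exists (fun i => w (to_nat (n, i))).
    intros j. destruct (prefix_bound (fun i => to_nat (n, i)) j) as [m [Hjm Hm]].
    specialize (Hw m n j). rewrite restr_length, firstn_restr in Hw by auto.
    replace (restr (fun i => w (to_nat (n, i))) j)
      with (map (fun i => nth (to_nat (n, i)) (restr w m) 0) (seq 0 j)).
    + apply Hw; auto. intros i Hi. rewrite restr_length. auto.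
    + apply map_ext_in. intros i Hin. apply in_seq in Hin.
      apply nth_restr. apply Hm. lia.
Qed.

Lemma analytic_open N : analytic (open_set_of T N).
Proof.
  (* the first digit of the witness is the length of an initial segment in N *)
  exists (fun eta d => match d with
                       | [] => True
                       | k :: _ => k < length eta -> N (firstn k eta) end).
  intros x Hx. unfold open_set_of. split.
  - intros [_ [eta [HN [_ He]]]]. exists (fun _ => length eta).
    intros [|m]; [exact I|]. rewrite restr_shift. cbv beta iota.
    rewrite restr_length. intros Hl. rewrite firstn_restr by lia. rewrite <- He. auto.
  - intros [w Hw]. split; auto. specialize (Hw (S (w 0))).
    rewrite restr_shift in Hw. cbv beta iota in Hw.
    rewrite restr_length, firstn_restr in Hw by lia.
    exists (restr x (w 0)). split; [apply Hw; lia|]. split; [apply Hx|].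
    apply restr_is_init.
Qed.

Lemma analytic_compl_open N : analytic (lim_compl (open_set_of T N)).
Proof.
  exists (fun eta _ => forall k, k <= length eta -> ~ N (firstn k eta)).
  intros x Hx. unfold lim_compl, open_set_of. split.
  - intros [_ Hn]. exists (fun _ => 0). intros m k Hk. rewrite restr_length in Hk.
    rewrite firstn_restr by auto. intros HN. apply Hn. split; auto.
    exists (restr x k). split; auto. split; [apply Hx|]. apply restr_is_init.
  - intros [w Hw]. split; auto. intros [_ [eta [HN [_ He]]]].
    apply (Hw (length eta) (length eta)); [rewrite restr_length; auto|].
    rewrite firstn_restr by auto. rewrite <- He. auto.
Qed.

Lemma Borel_analytic B : Borel T B -> analytic B /\ analytic (lim_compl B).
Proof.
  intros HB. apply (HB (fun X => analytic X /\ analytic (lim_compl X))).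
  - intros N. split; [apply analytic_open | apply analytic_compl_open].
  - intros A [HA HAc]. split; auto. eapply analytic_ext; [exact HA|].
    intros x Hx. unfold lim_compl. split; [tauto|].
    intros [_ Hn]. apply NNPP. tauto.
  - intros F HF. split.
    + apply analytic_union. intros n. apply HF.
    + eapply analytic_ext; [apply (analytic_inter (fun n => lim_compl (F n)));
                            intros n; apply HF|].
      intros x Hx. unfold lim_compl. firstorder.
  - intros A A' [HA HAc] Heq. split.
    + eapply analytic_ext; [exact HA|exact Heq].
    + eapply analytic_ext; [exact HAc|]. intros x Hx. unfold lim_compl.
      rewrite Heq by auto. tauto.
Qed.

Lemma Borel_ext A A' : Borel T A -> (forall x, lim T x -> (A x <-> A' x)) -> Borel T A'.
Proof. intros HA Heq S Hopen Hcompl Hunion Hext. apply (Hext A); [exact (HA S Hopen Hcompl Hunion Hext) | exact Heq].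
Qed.

Lemma Borel_open N : Borel T (open_set_of T N).
Proof. intros S Hopen _ _ _. apply Hopen. Qed.

End Analytic.

Section Game.
Variables (O : Type) (T Idef : list O -> Prop) (I : list O -> (list O -> Prop) -> Prop).
Local Notation splits := (splitting T Idef I).

Hypothesis I_empty : forall nu, splits nu -> I nu (fun _ => False).
Hypothesis I_sub : forall nu A B, splits nu -> I nu A -> (forall t, B t -> A t) -> I nu B.
Hypothesis I_union :
  forall nu A B, splits nu -> I nu A -> I nu B -> I nu (fun t => A t \/ B t).

(* A position (nu, d) is a node of T together with the digits of the witness
   chosen so far.  The ideal player names Z, the opponent moves to a successor
   (outside Z if nu splits) and appends a digit; ideal_wins K is the set of
   positions from which the ideal player can force K to fail. *)
Inductive ideal_wins (K : list O -> list nat -> Prop) : list O -> list nat -> Prop :=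
| ideal_wins_now nu d : ~ K nu d -> ideal_wins K nu d
| ideal_wins_step nu d (Z : list O -> Prop) :
    (splits nu -> I nu Z) ->
    (forall a k, T (nu ++ [a]) -> (splits nu -> ~ Z (nu ++ [a])) ->
       ideal_wins K (nu ++ [a]) (d ++ [k])) ->
    ideal_wins K nu d.

Definition strategy := list O -> list nat -> list O -> Prop.

Definition small_strategy (s : strategy) : Prop :=
  forall nu d, splits nu -> I nu (s nu d).

Definition avoids (s : strategy) (x : nat -> O) (w : nat -> nat) (n : nat) : Prop :=
  forall m, n <= m -> splits (restr x m) -> ~ s (restr x m) (restr w m) (restr x (S m)).

Definition winning_from (K : list O -> list nat -> Prop) (s : strategy)
  (nu : list O) (d : list nat) : Prop :=
  forall x w n, lim T x -> restr x n = nu -> restr w n = d -> avoids s x w n ->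
    exists m, n <= m /\ ~ K (restr x m) (restr w m).

(* Plays Z at (nu, d) and afterwards the strategy F (nu ++ [a]) k, where
   (a, k) is the move made from (nu, d).  Strategies have to be assembled
   along a derivation of ideal_wins like this: playing, at each position, an
   arbitrary Z witnessing ideal_wins need not make progress. *)
Definition glue (nu : list O) (d : list nat) (Z : list O -> Prop)
  (F : list O -> nat -> strategy) : strategy :=
  fun nu' d' t => (nu' = nu /\ d' = d /\ Z t) \/
    (length nu < length nu' /\
     F (firstn (S (length nu)) nu') (nth (length d) d' 0) nu' d' t).

Lemma glue_small nu d Z F :
  (splits nu -> I nu Z) -> (forall s k, small_strategy (F s k)) ->
  small_strategy (glue nu d Z F).
Proof.
  intros HZ HF nu' d' Hsp. unfold glue.
  destruct (classic (nu' = nu /\ d' = d)) as [[-> ->]|Hne].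
  - eapply I_sub; [exact Hsp| apply I_union; [exact Hsp| apply HZ, Hsp| apply HF, Hsp]|].
    intros t [[_ [_ Ht]]|[_ Ht]]; [left|right]; exact Ht.
  - eapply I_sub; [exact Hsp| apply HF, Hsp|].
    intros t [[? [? _]]|[_ Ht]]; [tauto|exact Ht].
Qed.

Lemma glue_winning K nu d Z F :
  (forall a k, T (nu ++ [a]) -> (splits nu -> ~ Z (nu ++ [a])) ->
     winning_from K (F (nu ++ [a]) k) (nu ++ [a]) (d ++ [k])) ->
  winning_from K (glue nu d Z F) nu d.
Proof.
  intros HF x w n Hx Hn Hw Havoid.
  assert (Hl : length nu = n) by (rewrite <- Hn; apply restr_length).
  assert (Hld : length d = n) by (rewrite <- Hw; apply restr_length).
  assert (Hnext : restr x (S n) = nu ++ [x n]) by (rewrite restr_S, Hn; reflexivity).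
  assert (HnZ : splits nu -> ~ Z (nu ++ [x n])).
  { intros Hsp HZ. rewrite <- Hn in Hsp. apply (Havoid n (le_n n) Hsp).
    left. rewrite Hn, Hw, Hnext. auto. }
  destruct (HF (x n) (w n)) with (x := x) (w := w) (n := S n)
    as [m [Hm HK]]; auto.
  - rewrite <- Hnext. apply Hx.
  - rewrite restr_S, Hw. reflexivity.
  - intros m Hm Hsp HFm. apply (Havoid m ltac:(lia) Hsp). right. split.
    + rewrite restr_length. lia.
    + rewrite Hl, Hld, firstn_restr, nth_restr, Hnext by lia. exact HFm.
  - exists m. split; [lia|exact HK].
Qed.

Lemma ideal_wins_strategy K nu d :
  ideal_wins K nu d -> exists s, small_strategy s /\ winning_from K s nu d.
Proof.
  induction 1 as [nu d HK|nu d Z HZ _ IH].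
  - exists (fun _ _ _ => False). split; [intros nu' d' Hsp; apply I_empty, Hsp|].
    intros x w n _ Hn Hw _. exists n. split; [lia|]. rewrite Hn, Hw. exact HK.
  - assert (Hsub : forall p : list O * nat, exists s, small_strategy s /\
      forall a, fst p = nu ++ [a] -> T (fst p) -> (splits nu -> ~ Z (fst p)) ->
        winning_from K s (fst p) (d ++ [snd p])).
    { intros [t k]. simpl.
      destruct (classic (exists a, t = nu ++ [a] /\ T t /\ (splits nu -> ~ Z t)))
        as [[a [-> [Ht HnZ]]]|Hno].
      - destruct (IH a k Ht HnZ) as [s Hs]. exists s. split; [apply Hs|].
        intros a' Ha' _ _. apply app_inj_tail in Ha' as [_ <-]. apply Hs.
      - exists (fun _ _ _ => False). split; [intros nu' d' Hsp; apply I_empty, Hsp|].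
        intros a Ha Ht HnZ. exfalso. eauto. }
    destruct (choice _ Hsub) as [G HG].
    exists (glue nu d Z (fun t k => G (t, k))). split.
    + apply glue_small; [exact HZ|]. intros t k. apply (HG (t, k)).
    + apply glue_winning. intros a k Ht HnZ. apply (proj2 (HG (nu ++ [a], k)) a); auto.
Qed.

Lemma not_ideal_wins_move K nu d (Z : list O -> Prop) :
  ~ ideal_wins K nu d -> (splits nu -> I nu Z) ->
  exists a, T (nu ++ [a]) /\ (splits nu -> ~ Z (nu ++ [a])) /\
    exists k, ~ ideal_wins K (nu ++ [a]) (d ++ [k]).
Proof.
  intros Hn HZ. apply NNPP. intros Hno. apply Hn.
  apply ideal_wins_step with Z; [exact HZ|]. intros a k Ht HnZ.
  apply NNPP. intros Hk. apply Hno. eauto.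
Qed.

Section Opponent.
Variable K : list O -> list nat -> Prop.

(* Each digit keeps the opponent out of ideal_wins whenever possible; as the
   digits are a function of the node, they fit together along every branch
   into a single witness. *)
Definition next_digit (d : list nat) (t : list O) : nat :=
  epsilon (inhabits 0) (fun k => ~ ideal_wins K t (d ++ [k])).

Fixpoint extend_digits (pre rest : list O) (d : list nat) : list nat :=
  match rest with
  | [] => d
  | a :: r => extend_digits (pre ++ [a]) r (d ++ [next_digit d (pre ++ [a])])
  end.

Definition node_digits (eta : list O) : list nat := extend_digits [] eta [].

Lemma extend_digits_snoc r : forall pre d a,
  extend_digits pre (r ++ [a]) d =
  extend_digits pre r d ++ [next_digit (extend_digits pre r d) (pre ++ r ++ [a])].
Proof.
  induction r as [|b r IH]; intros pre d a; simpl; [reflexivity|].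
  rewrite IH, <- app_assoc. reflexivity.
Qed.

Lemma node_digits_snoc eta a :
  node_digits (eta ++ [a]) = node_digits eta ++ [next_digit (node_digits eta) (eta ++ [a])].
Proof. apply extend_digits_snoc. Qed.

Lemma node_digits_restr (x : nat -> O) n :
  node_digits (restr x n) = restr (fun i => nth i (node_digits (restr x (S i))) 0) n.
Proof.
  induction n as [|n IH]; [reflexivity|].
  rewrite !restr_S, node_digits_snoc, IH. f_equal. f_equal.
  rewrite app_nth2, restr_length, Nat.sub_diag by (rewrite restr_length; lia).
  reflexivity.
Qed.

Definition opponent_tree (eta : list O) : Prop :=
  T eta /\ forall e1 e2, eta = e1 ++ e2 -> ~ ideal_wins K e1 (node_digits e1).

Lemma opponent_tree_not_wins eta :
  opponent_tree eta -> ~ ideal_wins K eta (node_digits eta).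
Proof. intros [_ H]. apply (H eta []). rewrite app_nil_r. reflexivity. Qed.

Lemma opponent_tree_move eta (Z : list O -> Prop) :
  opponent_tree eta -> (splits eta -> I eta Z) ->
  exists a, (splits eta -> ~ Z (eta ++ [a])) /\ opponent_tree (eta ++ [a]).
Proof.
  intros Hq HZ.
  destruct (not_ideal_wins_move (opponent_tree_not_wins Hq) HZ)
    as [a [Ht [HnZ Hk]]].
  exists a. split; [exact HnZ|]. split; [exact Ht|].
  intros e1 e2 He. destruct e2 as [|c r] using rev_ind.
  - rewrite app_nil_r in He. subst e1. rewrite node_digits_snoc.
    exact (epsilon_spec (inhabits 0) _ Hk).
  - rewrite app_assoc in He. apply app_inj_tail in He as [-> _].
    apply (proj2 Hq e1 r). reflexivity.
Qed.

Lemma opponent_tree_tree :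
  tree T -> ~ ideal_wins K [] [] -> tree opponent_tree.
Proof.
  intros [[e0 He0] [Hpre _]] H0. split; [|split].
  - exists []. split; [apply (Hpre [] e0), He0|].
    intros e1 e2 He. symmetry in He. apply app_eq_nil in He as [-> _]. exact H0.
  - intros eta nu [Ht Hq]. split; [eapply Hpre; eauto|].
    intros e1 e2 ->. apply (Hq e1 (e2 ++ nu)). rewrite app_assoc. reflexivity.
  - intros eta Hq. destruct (opponent_tree_move (Z := fun _ => False) Hq) as [a [_ Ha]].
    + apply I_empty.
    + eauto.
Qed.

Lemma opponent_tree_le_star : le_star T Idef I opponent_tree.
Proof.
  split; [intros eta [Ht _]; exact Ht|].
  intros eta Hq Hsp HI.
  destruct (opponent_tree_move (Z := Succ opponent_tree eta) Hq (fun _ => HI))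
    as [a [HnS Ha]].
  apply (HnS Hsp). exists a. auto.
Qed.

Lemma opponent_tree_branch x :
  lim opponent_tree x -> exists w : nat -> nat, forall n, K (restr x n) (restr w n).
Proof.
  intros Hx. eexists. intros n. rewrite <- node_digits_restr.
  apply NNPP. intros HK. apply (opponent_tree_not_wins (Hx n)).
  apply ideal_wins_now, HK.
Qed.

End Opponent.

Lemma branch_of_choice (P : list O -> O -> Prop) :
  T [] -> (forall eta, T eta -> exists a, T (eta ++ [a]) /\ P eta a) ->
  exists x, lim T x /\ forall m, P (restr x m) (x m).
Proof.
  intros HT0 Hnext. destruct (Hnext [] HT0) as [a0 _].
  destruct (choice (fun eta a => T eta -> T (eta ++ [a]) /\ P eta a)) as [nf Hnf].
  { intros eta. destruct (classic (T eta)) as [Ht|Ht].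
    - destruct (Hnext eta Ht) as [a Ha]. exists a. auto.
    - exists a0. tauto. }
  pose (path := fix path n := match n with 0 => [] | S n => path n ++ [nf (path n)] end).
  exists (fun n => nf (path n)).
  assert (Hp : forall n, restr (fun n => nf (path n)) n = path n).
  { induction n as [|n IH]; [reflexivity|]. rewrite restr_S, IH. reflexivity. }
  assert (HpT : forall n, T (path n)).
  { induction n as [|n IH]; [exact HT0|]. apply Hnf, IH. }
  split; intros n; rewrite Hp; [apply HpT|]. apply Hnf, HpT.
Qed.

Lemma branch_avoiding (Sg : list O -> list O -> Prop) :
  tree T -> (forall nu, splits nu -> I nu (Sg nu)) ->
  exists x, lim T x /\
    forall m, splits (restr x m) -> ~ Sg (restr x m) (restr x (S m)).
Proof.
  intros [[e0 He0] [Hpre Hext]] HSg.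
  destruct (branch_of_choice (fun eta a => splits eta -> ~ Sg eta (eta ++ [a])))
    as [x [Hx HP]].
  - apply (Hpre [] e0), He0.
  - intros eta Ht. destruct (classic (splits eta)) as [Hsp|Hsp].
    + apply NNPP. intros Hno. apply (proj2 (proj2 Hsp)).
      eapply I_sub; [exact Hsp | exact (HSg eta Hsp) |]. intros t [a [-> Ha]].
      apply NNPP. intros HnS. apply Hno. exists a. auto.
    + destruct (Hext eta Ht) as [a Ha]. exists a. tauto.
  - exists x. split; [exact Hx|]. intros m. rewrite restr_S. apply HP.
Qed.

End Game.

Lemma le_star_lim (O : Type) (T Idef T' : list O -> Prop) I x :
  le_star T Idef I T' -> lim T' x -> lim T x.
Proof. intros [Hsub _] Hx n. apply Hsub, Hx. Qed.

Lemma tagged_tree_splitting_ideal (O : Type) (T Idef : list O -> Prop) Dom I nu :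
  tagged_tree T Idef Dom I -> splitting T Idef I nu -> ideal (Dom nu) (I nu).
Proof. intros [_ H] [Ht [Hd _]]. apply H; auto. Qed.

Lemma succ_complete_empty (O L : Type) (X : list O -> Prop) (J : (list O -> Prop) -> Prop) :
  succ_complete L J -> ideal X J -> J (fun _ => False).
Proof.
  intros Hc [_ [_ [Hsub _]]].
  apply (Hsub (fun s => exists e : Empty_set, match e with end)).
  - apply (Hc Empty_set (fun e => match e with end)); intros [].
  - intros s [].
Qed.

Lemma succ_complete_union_list_nat (O L : Type) (J : (list O -> Prop) -> Prop)
  (g : nat -> L) :
  (forall m n, g m = g n -> m = n) -> succ_complete L J ->
  forall A : L -> list nat -> list O -> Prop,
    (forall a d, J (A a d)) -> J (fun t => exists a d, A a d t).
Proof.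
  intros Hg Hc A HA. apply (Hc L (fun a => a)); [auto|]. intros a.
  apply (Hc (list nat) (fun d => g (list_code d))); [|auto].
  intros d d' H. apply list_code_inj, Hg, H.
Qed.

Lemma Borel_cover_subtree (O L : Type) (g : nat -> L)
  (T Idef : list O -> Prop) (Dom : list O -> list O -> Prop)
  (I : list O -> (list O -> Prop) -> Prop) :
  (forall m n, g m = g n -> m = n) ->
  tagged_tree T Idef Dom I -> tagged_complete L T Idef I ->
  forall B : L -> (nat -> O) -> Prop,
    (forall a, Borel T (B a)) -> (forall x, lim T x -> exists a, B a x) ->
    exists a T', tree T' /\ le_star T Idef I T' /\ (forall x, lim T' x -> B a x).
Proof.
  intros Hg HT Hcomp B HB Hcov.
  pose proof (fun nu => @tagged_tree_splitting_ideal _ _ _ _ _ nu HT) as Hideal.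
  assert (I_empty : forall nu, splitting T Idef I nu -> I nu (fun _ => False)).
  { intros nu Hsp. pose proof Hsp as [Ht [Hd _]].
    exact (succ_complete_empty (Hcomp nu Ht Hd) (Hideal nu Hsp)). }
  assert (I_sub : forall nu A A', splitting T Idef I nu -> I nu A ->
            (forall t, A' t -> A t) -> I nu A').
  { intros nu A A' Hsp. apply (Hideal nu Hsp). }
  assert (I_union : forall nu A A', splitting T Idef I nu -> I nu A -> I nu A' ->
            I nu (fun t => A t \/ A' t)).
  { intros nu A A' Hsp. apply (Hideal nu Hsp). }
  destruct (choice (fun a K => forall x, lim T x ->
              (B a x <-> exists w : nat -> nat, forall n, K (restr x n) (restr w n))))
    as [K HK]; [intros a; apply Borel_analytic, HB|].
  destruct (classic (exists a, ~ ideal_wins T Idef I (K a) [] [])) as [[a Ha]|Hall].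
  - pose proof (opponent_tree_le_star T Idef I (K a)) as Hle.
    exists a, (opponent_tree T Idef I (K a)). split; [|split; [exact Hle|]].
    + apply opponent_tree_tree; [exact I_empty|apply HT|exact Ha].
    + intros x Hx. apply HK; [exact (le_star_lim Hle Hx)|].
      exact (opponent_tree_branch Hx).
  - destruct (choice (fun a s => small_strategy T Idef I s /\
                                 winning_from T Idef I (K a) s [] [])) as [s Hs].
    { intros a. apply ideal_wins_strategy; auto. apply NNPP. eauto. }
    destruct (branch_avoiding I_sub (fun nu t => exists a d, s a nu d t))
      as [x [Hx Havoid]]; [apply HT| |].
    { intros nu Hsp. pose proof Hsp as [Ht [Hd _]].
      apply (succ_complete_union_list_nat g Hg (Hcomp nu Ht Hd)).
      intros a d. apply (proj1 (Hs a)), Hsp. }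
    destruct (Hcov x Hx) as [a Ha]. apply HK in Ha as [w Hw]; [|exact Hx].
    destruct (proj2 (Hs a) x w 0 Hx eq_refl eq_refl) as [m [_ Hm]].
    + intros m _ Hsp Hs'. apply (Havoid m Hsp). eauto.
    + exfalso. apply Hm, Hw.
Qed.

Lemma Borel_fibers_constant_subtree (O L : Type) (g : nat -> L)
  (T Idef : list O -> Prop) (Dom : list O -> list O -> Prop)
  (I : list O -> (list O -> Prop) -> Prop) (Y : Type) (H : (nat -> O) -> Y)
  (h : Y -> L) :
  (forall m n, g m = g n -> m = n) ->
  tagged_tree T Idef Dom I -> tagged_complete L T Idef I ->
  (forall x x', lim T x -> lim T x' -> h (H x) = h (H x') -> H x = H x') ->
  (forall y, Borel T (fun x => H x = y)) ->
  exists T', tree T' /\ le_star T Idef I T' /\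
    (forall x x', lim T' x -> lim T' x' -> H x = H x').
Proof.
  intros Hg HT Hcomp Hh HBor.
  destruct (Borel_cover_subtree g Hg HT Hcomp (fun a x => h (H x) = a))
    as [a [T' [HT' [Hle Ha]]]].
  - intros a.
    destruct (classic (exists x0, lim T x0 /\ h (H x0) = a)) as [[x0 [Hx0 <-]]|Hno].
    + apply Borel_ext with (fun x => H x = H x0); [apply HBor|].
      intros x Hx. split; [intros ->; reflexivity|]. intros E. apply Hh; auto.
    + apply Borel_ext with (open_set_of T (fun _ => False)); [apply Borel_open|].
      intros x Hx. split; [intros [_ [_ [[] _]]]|]. intros E. exfalso. eauto.
  - eauto.
  - exists T'. split; [exact HT'|split; [exact Hle|]].
    intros x x' Hx Hx'.
    apply Hh; [exact (le_star_lim Hle Hx)|exact (le_star_lim Hle Hx')|].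
    rewrite (Ha x Hx), (Ha x' Hx'). reflexivity.
Qed.

Theorem lemma1p7 (O L : Type)
  (L_infinite : exists g : nat -> L, forall m n, g m = g n -> m = n)
  (T : list O -> Prop) (Idef : list O -> Prop)
  (Dom : list O -> list O -> Prop) (I : list O -> (list O -> Prop) -> Prop)
  (HT : tagged_tree T Idef Dom I)
  (Hcomp : tagged_complete L T Idef I) :
  (forall B : L -> (nat -> O) -> Prop,
     (forall a, Borel T (B a)) ->
     (forall x, lim T x -> exists a, B a x) ->
     exists a, exists T' : list O -> Prop,
       tree T' /\ le_star T Idef I T' /\ (forall x, lim T' x -> B a x))
  /\
  (forall (Y : Type) (H : (nat -> O) -> Y),
     (exists g : Y -> L, forall x x', lim T x -> lim T x' ->
        g (H x) = g (H x') -> H x = H x') ->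
     (forall y, Borel T (fun x => H x = y)) ->
     exists T' : list O -> Prop,
       tree T' /\ le_star T Idef I T' /\
       (forall x x', lim T' x -> lim T' x' -> H x = H x')).
Proof.
  destruct L_infinite as [g Hg]. split.
  - exact (Borel_cover_subtree g Hg HT Hcomp).
  - intros Y H [h Hh]. exact (Borel_fibers_constant_subtree g H h Hg HT Hcomp Hh).
Qed.
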